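(* Let $(A,\succ,\prec,\omega)$ be a quadratic anti-pre-Novikov algebra and $s\in A\otimes A$ such that $s+\tau(s)$ is invariant. Define $P:A\to A$ by $P(x)=T_s\omega^\sharp(x)$. Then $s$ is a solution of the anti-pre-Novikov Yang–Baxter equation in $(A,\succ,\prec)$ if and only if for all $x,y\in A$: $P(x)\succ P(y)=P\big(P(x)\succ y+x\succ P(y)-x\succ T_{s+\tau(s)}\omega^\sharp(y)\big)$ and $P(x)\prec P(y)=P\big(P(x)\prec y+x\prec P(y)-x\prec T_{s+\tau(s)}\omega^\sharp(y)\big)$.
   Context: $A$ is finite-dimensional over a field $k$. An anti-pre-Novikov algebra is $(A,\succ,\prec)$ such that with $x\circ y=x\succ y+x\prec y$: $(x\circ y-y\circ x)\succ z=y\succ(x\succ z)-x\succ(y\succ z)$; $x\prec(y\circ z)=(y\succ x)\prec z-(x\prec y)\prec z-y\succ(x\prec z)$; $(x\circ y)\succ z=-(x\succ z)\prec y$; $(x\prec y)\prec z=(x\prec z)\prec y$; $(x\circ y-y\circ x)\prec z=x\succ(y\circ z)-y\succ(x\circ z)$. It is quadratic with respect to $\omega$ if $\omega$ is non-degenerate symmetric bilinear with $\omega(x\prec y,z)=-\omega(x,z\circ y)$, $\omega(x\succ y,z)=\omega(x\circ z+z\circ x,y)$. $\omega^\sharp:A\to A^*$ is $\langle\omega^\sharp(x),y\rangle=\omega(x,y)$. For $r\in A\otimes A$, $T_r:A^*\to A$ is $\langle T_r(\zeta),\eta\rangle=\langle r,\zeta\otimes\eta\rangle$; $\tau$ is the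 flip. With $L_\ast(x)y=x\ast y$, $R_\ast(x)y=y\ast x$, $x\odot y=x\succ y+y\prec x$, $L_{\star}=L_{\circ}+R_{\circ}$, $L_{\odot}=L_{\succ}+R_{\prec}$: $r$ is invariant if $(I\otimes L_{\star}(x)-L_{\succ}(x)\otimes I)r=0$ and $(L_{\circ}(x)\otimes I-I\otimes L_{\odot}(x))r=0$ for all $x$. For $s=\sum_i a_i\otimes b_i$ the anti-pre-Novikov Yang–Baxter equation is $\sum_{i,j}a_i\circ a_j\otimes b_i\otimes b_j+\sum_{i,j}a_j\otimes a_i\otimes(b_i\odot b_j)+\sum_{i,j}a_i\otimes(b_i\prec a_j)\otimes b_j=0$. *)

(* A finite-dimensional k-vector space A of dimension n is
   modelled as 'rV[k]_n (coordinates in the standard basis evec i);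
   A ⊗ A is modelled by coefficient matrices 'M[k]_n
   (r = \sum_{i,j} r i j e_i ⊗ e_j), A ⊗ A ⊗ A by coefficient functions
   on 'I_n * 'I_n * 'I_n, and A^* by 'rV[k]_n via the pairing
   <z, x> = \sum_i z_i x_i. *)
From HB Require Import structures.
From mathcomp Require Import all_boot all_order all_algebra.
Set Implicit Arguments. Unset Strict Implicit. Unset Printing Implicit Defensive.
Import GRing.Theory.
Local Open Scope ring_scope.

Section APN.
Variables (k : fieldType) (n : nat).
Local Notation A := 'rV[k]_n.

Definition evec (i : 'I_n) : A := delta_mx 0 i.

Definition pairing (z x : A) : k := \sum_i z 0 i * x 0 i.

Definition tens2 (a b : A) : 'M[k]_n := \matrix_(i, j) (a 0 i * b 0 j).
Definition tens3 (a b c : A) : {ffun 'I_n * 'I_n * 'I_n -> k} :=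
  [ffun t => a 0 t.1.1 * b 0 t.1.2 * c 0 t.2].

Definition tflip (r : 'M[k]_n) : 'M[k]_n := r^T.

Definition tmap2 (f g : A -> A) (r : 'M[k]_n) : 'M[k]_n :=
  \sum_i \sum_j r i j *: tens2 (f (evec i)) (g (evec j)).

(* T_r : A^* -> A,  <T_r z, eta> = <r, z ⊗ eta> *)
Definition Tmap (r : 'M[k]_n) (z : A) : A := \row_j (\sum_i z 0 i * r i j).

Definition omega_sharp (om : A -> A -> k) (x : A) : A := \row_j om x (evec j).

Definition bilinear_op (m : A -> A -> A) : Prop :=
  (forall (a : k) x y z, m (a *: x + y) z = a *: m x z + m y z) /\
  (forall (a : k) x y z, m z (a *: x + y) = a *: m z x + m z y).

Definition bilinear_form (om : A -> A -> k) : Prop :=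
  (forall (a : k) x y z, om (a *: x + y) z = a * om x z + om y z) /\
  (forall (a : k) x y z, om z (a *: x + y) = a * om z x + om z y).

Variables (succ prec : A -> A -> A).
Definition circ x y := succ x y + prec x y.
Definition odot x y := succ x y + prec y x.
Definition Lsucc x := fun y => succ x y.
Definition Lcirc x := fun y => circ x y.
Definition Lstar x := fun y => circ x y + circ y x.
Definition Lodot x := fun y => odot x y.

Definition anti_pre_Novikov : Prop :=
  (forall x y z, succ (circ x y - circ y x) z = succ y (succ x z) - succ x (succ y z)) /\
  (forall x y z, prec x (circ y z) =
                 prec (succ y x) z - prec (prec x y) z - succ y (prec x z)) /\
  (forall x y z, succ (circ x y) z = - prec (succ x z) y) /\
  (forall x y z, prec (prec x y) z = prec (prec x z) y) /\
  (forall x y z, prec (circ x y - circ y x) z = succ x (circ y z) - succ y (circ x z)).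

Definition quadratic (om : A -> A -> k) : Prop :=
  [/\ bilinear_form om,
      (forall x y, om x y = om y x),
      (forall x, (forall y, om x y = 0) -> x = 0),
      (forall x y z, om (prec x y) z = - om x (circ z y)) &
      (forall x y z, om (succ x y) z = om (circ x z + circ z x) y)].

Definition inv_tensor (r : 'M[k]_n) : Prop :=
  forall x, tmap2 id (Lstar x) r - tmap2 (Lsucc x) id r = 0 /\
            tmap2 (Lcirc x) id r - tmap2 id (Lodot x) r = 0.

(* s = \sum_p a_p ⊗ b_p with p = (i,j), a_p = s i j e_i, b_p = e_j *)
Definition tfst (s : 'M[k]_n) (p : 'I_n * 'I_n) : A := s p.1 p.2 *: evec p.1.
Definition tsnd (p : 'I_n * 'I_n) : A := evec p.2.

Definition APN_YBE (s : 'M[k]_n) : Prop :=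
  \sum_(p : 'I_n * 'I_n) \sum_(q : 'I_n * 'I_n)
     (tens3 (circ (tfst s p) (tfst s q)) (tsnd p) (tsnd q)
    + tens3 (tfst s q) (tfst s p) (odot (tsnd p) (tsnd q))
    + tens3 (tfst s p) (prec (tsnd p) (tfst s q)) (tsnd q)) = 0.
End APN.

From Pilot Require Import Defs.
From HB Require Import structures.
From mathcomp Require Import all_boot all_order all_algebra.
From mathcomp Require Import ring.
Set Implicit Arguments. Unset Strict Implicit. Unset Printing Implicit Defensive.
Import GRing.Theory.
Local Open Scope ring_scope.

(** Write P' = T_{τ(s)} ω♯, so that Q := T_{s+τ(s)} ω♯ = P + P'.  Symmetry of ω
    makes P' the ω-adjoint of P, and invariance of the symmetric tensor s + τ(s)
    together with the quadratic identities makes Q commute with all left and right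
    multiplications.  Evaluating the Yang–Baxter tensor at ω♯x ⊗ ω♯y ⊗ ω♯z gives a
    trilinear form which these two facts rewrite both as -ω(D≺(x,z), y) and as
    ω(z, D≺(x,y) + D≻(y,x)), where D≻ and D≺ are the defects of the two operator
    identities.  As ω is non-degenerate, ω♯ is onto, so the tensor vanishes iff
    both defects do. *)

Section LinearFor.
Variables (R : pzRingType) (U : lmodType R) (V : zmodType) (sc : GRing.Scale.law R V).
Variables (f : U -> V) (f_lin : linear_for sc f).

Let fL : {linear U -> V | sc} := HB.pack f (GRing.isLinear.Build R U V sc f f_lin).

Lemma linear_for0 : f 0 = 0. Proof. exact: (linear0 fL). Qed.
Lemma linear_forD x y : f (x + y) = f x + f y. Proof. exact: (linearD fL). Qed.
Lemma linear_forB x y : f (x - y) = f x - f y. Proof. exact: (raddfB fL). Qed.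
Lemma linear_forZ a x : f (a *: x) = sc a (f x). Proof. exact: (linearZ_LR fL). Qed.
Lemma linear_for_sum I r (P : pred I) (F : I -> U) :
  f (\sum_(i <- r | P i) F i) = \sum_(i <- r | P i) f (F i).
Proof. exact: (linear_sum fL). Qed.

End LinearFor.

Section Tensors.
Variables (k : fieldType) (n : nat).
Local Notation A := 'rV[k]_n.
Local Notation e := (evec k).

Lemma bilinear_opl (m : A -> A -> A) : bilinear_op m -> forall z, linear (m ^~ z).
Proof. by case=> + _ z a x y; apply. Qed.
Lemma bilinear_opr (m : A -> A -> A) : bilinear_op m -> forall z, linear (m z).
Proof. by case=> _ + z a x y; apply. Qed.
Lemma bilinear_forml (om : A -> A -> k) : bilinear_form om -> forall z, scalar (om ^~ z).
Proof. by case=> + _ z a x y; apply. Qed.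
Lemma bilinear_formr (om : A -> A -> k) : bilinear_form om -> forall z, scalar (om z).
Proof. by case=> _ + z a x y; apply. Qed.

Lemma bilinear_opD (m1 m2 : A -> A -> A) : bilinear_op m1 -> bilinear_op m2 ->
  bilinear_op (fun x y => m1 x y + m2 x y).
Proof.
by move=> [l1 r1] [l2 r2]; split=> a x y z;
  rewrite ?l1 ?l2 ?r1 ?r2 scalerDr addrACA.
Qed.

Lemma bilinear_op_flip (m : A -> A -> A) : bilinear_op m -> bilinear_op (fun x y => m y x).
Proof. by case=> l r; split=> a x y z; rewrite ?l ?r. Qed.

Lemma scalar_expand (G : A -> k) : scalar G -> forall x, G x = \sum_j x 0 j * G (e j).
Proof.
move=> G_lin x; rewrite {1}(row_sum_delta x) (linear_for_sum G_lin).
by apply: eq_bigr => j _; rewrite (linear_forZ G_lin).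
Qed.

Lemma bilinear_op_sum (G : A -> k) (m : A -> A -> A) : scalar G -> bilinear_op m ->
  forall (I J : finType) (c : I -> k) (u : I -> A) (d : J -> k) (v : J -> A),
  G (m (\sum_i c i *: u i) (\sum_j d j *: v j)) =
  \sum_i \sum_j c i * d j * G (m (u i) (v j)).
Proof.
move=> G_lin m_bil I J c u d v.
rewrite (linear_for_sum (bilinear_opl m_bil _)) (linear_for_sum G_lin).
apply: eq_bigr => i _; rewrite (linear_forZ (bilinear_opl m_bil _)) (linear_forZ G_lin) /=.
rewrite (linear_for_sum (bilinear_opr m_bil _)) (linear_for_sum G_lin) mulr_sumr.
apply: eq_bigr => j _; rewrite (linear_forZ (bilinear_opr m_bil _)) (linear_forZ G_lin) /=.
by rewrite mulrA.
Qed.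

Lemma evecE (i j : 'I_n) : e i 0 j = (i == j)%:R.
Proof. by rewrite mxE eqxx eq_sym. Qed.

Lemma pairing_scalar (z : A) : scalar (pairing z).
Proof.
move=> a x y; rewrite /pairing mulr_sumr -big_split /=; apply: eq_bigr => i _.
by rewrite !mxE; ring.
Qed.

Lemma pairing_evec (z : A) j : pairing z (e j) = z 0 j.
Proof.
rewrite /pairing (bigD1 j) //= big1 => [|i ij]; first by rewrite evecE eqxx mulr1 addr0.
by rewrite evecE eq_sym (negbTE ij) mulr0.
Qed.

Definition contract2 (r : 'M[k]_n) (z w : A) : k :=
  \sum_i \sum_j r i j * (z 0 i * w 0 j).

Lemma Tmap_expand (r : 'M[k]_n) (z : A) : Tmap r z = \sum_i \sum_j (z 0 i * r i j) *: e j.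
Proof.
rewrite {1}(row_sum_delta (Tmap _ _)) exchange_big; apply: eq_bigr => j _.
by rewrite -scaler_suml mxE.
Qed.

Lemma TmapD (r1 r2 : 'M[k]_n) (z : A) : Tmap (r1 + r2) z = Tmap r1 z + Tmap r2 z.
Proof.
by apply/rowP => j; rewrite !mxE -big_split /=; apply: eq_bigr => i _; rewrite mxE mulrDr.
Qed.

Lemma pairing_Tmap (r : 'M[k]_n) (z w : A) : pairing w (Tmap r z) = contract2 r z w.
Proof.
rewrite /pairing /contract2 exchange_big; apply: eq_bigr => j _.
by rewrite mxE mulr_sumr; apply: eq_bigr => i _; ring.
Qed.

Lemma contract2_tflip (r : 'M[k]_n) (z w : A) : contract2 (tflip r) z w = contract2 r w z.
Proof.
rewrite /contract2 exchange_big; apply: eq_bigr => i _; apply: eq_bigr => j _.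
by rewrite mxE [z 0 j * _]mulrC.
Qed.

Lemma contract2_scalar (z w : A) : scalar (fun r => contract2 r z w).
Proof.
move=> a r1 r2; rewrite /contract2 mulr_sumr -big_split /=; apply: eq_bigr => i _.
by rewrite mulr_sumr -big_split /=; apply: eq_bigr => j _; rewrite !mxE; ring.
Qed.

Lemma contract2_tens2 (a b z w : A) : contract2 (tens2 a b) z w = pairing z a * pairing w b.
Proof.
rewrite /pairing mulr_suml; apply: eq_bigr => i _.
by rewrite mulr_sumr; apply: eq_bigr => j _; rewrite mxE; ring.
Qed.

Lemma contract2_tmap2 (f g : A -> A) (r : 'M[k]_n) (z w : A) : contract2 (tmap2 f g r) z w =
  \sum_i \sum_j r i j * (pairing z (f (e i)) * pairing w (g (e j))).
Proof.
rewrite /tmap2 (linear_for_sum (contract2_scalar _ _)); apply: eq_bigr => i _.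
rewrite (linear_for_sum (contract2_scalar _ _)); apply: eq_bigr => j _.
by rewrite (linear_forZ (contract2_scalar _ _)) contract2_tens2.
Qed.

Lemma contract2_tmap2_idl (g : A -> A) : linear g ->
  forall r z w, contract2 (tmap2 id g r) z w = pairing w (g (Tmap r z)).
Proof.
move=> g_lin r z w; have pg_lin : scalar (fun x => pairing w (g x)).
  by move=> a x y; rewrite g_lin (pairing_scalar w).
rewrite contract2_tmap2 Tmap_expand (linear_for_sum pg_lin).
apply: eq_bigr => i _; rewrite (linear_for_sum pg_lin); apply: eq_bigr => j _.
by rewrite (linear_forZ pg_lin) pairing_evec /=; ring.
Qed.

Lemma contract2_tmap2_idr (f : A -> A) : linear f ->
  forall r z w, contract2 (tmap2 f id r) z w = pairing z (f (Tmap (tflip r) w)).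
Proof.
move=> f_lin r z w; rewrite -contract2_tmap2_idl // !contract2_tmap2 exchange_big.
by apply: eq_bigr => i _; apply: eq_bigr => j _; rewrite mxE !pairing_evec; ring.
Qed.

Definition contract3 (Y : {ffun 'I_n * 'I_n * 'I_n -> k}) (z w v : A) : k :=
  \sum_t Y t * (z 0 t.1.1 * w 0 t.1.2 * v 0 t.2).

Lemma contract3D (Y1 Y2 : {ffun 'I_n * 'I_n * 'I_n -> k}) (z w v : A) :
  contract3 (Y1 + Y2) z w v = contract3 Y1 z w v + contract3 Y2 z w v.
Proof. by rewrite /contract3 -big_split /=; apply: eq_bigr => t _; rewrite ffunE mulrDl. Qed.

Lemma contract30 (z w v : A) : contract3 0 z w v = 0.
Proof. by rewrite /contract3 big1 // => t _; rewrite ffunE mul0r. Qed.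

Lemma contract3_sum (I : Type) (r : seq I) (P : pred I)
    (Y : I -> {ffun 'I_n * 'I_n * 'I_n -> k}) (z w v : A) :
  contract3 (\sum_(i <- r | P i) Y i) z w v = \sum_(i <- r | P i) contract3 (Y i) z w v.
Proof. exact: (big_morph _ (fun Y1 Y2 => contract3D Y1 Y2 z w v) (contract30 z w v)). Qed.

Lemma contract3_tens3 (a b c z w v : A) :
  contract3 (tens3 a b c) z w v = pairing z a * pairing w b * pairing v c.
Proof.
rewrite /pairing big_distrlr /= pair_bigA big_distrlr /= pair_bigA /contract3.
by apply: eq_bigr => -[[i j] l] _; rewrite ffunE /=; ring.
Qed.

Lemma contract3_eq0 (Y : {ffun 'I_n * 'I_n * 'I_n -> k}) :
  (forall z w v, contract3 Y z w v = 0) -> Y = 0.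
Proof.
move=> Y0; apply/ffunP => -[[a b] c]; rewrite ffunE -(Y0 (e a) (e b) (e c)).
rewrite /contract3 (bigD1 ((a, b), c)) //= big1 => [|[[i j] l] /= t_ne].
  by rewrite !evecE !eqxx !mulr1 addr0.
rewrite !evecE -!natrM [a == i]eq_sym [b == j]eq_sym [c == l]eq_sym.
by move: t_ne; rewrite !xpair_eqE; case: (i == a); case: (j == b); case: (l == c);
  rewrite //= mulr0.
Qed.

End Tensors.

Section QuadraticAlgebra.
Variables (k : fieldType) (n : nat).
Local Notation A := 'rV[k]_n.
Local Notation e := (evec k).
Variables (succ prec : A -> A -> A) (om : A -> A -> k).
Hypotheses (succ_bil : bilinear_op succ) (prec_bil : bilinear_op prec).
Hypothesis om_quad : quadratic succ prec om.

Local Notation circ := (circ succ prec).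
Local Notation odot := (odot succ prec).
Local Notation omega_sharp := (omega_sharp om).

Let om_bil : bilinear_form om. Proof. by case: om_quad. Qed.
Let om_sym x y : om x y = om y x. Proof. by case: om_quad => _ ->. Qed.
Let om_nondeg x : (forall y, om x y = 0) -> x = 0. Proof. by case: om_quad => _ _ /(_ x). Qed.

Let om_scalarl z : scalar (om ^~ z). Proof. exact: bilinear_forml om_bil z. Qed.
Let om_scalarr z : scalar (om z). Proof. exact: bilinear_formr om_bil z. Qed.
Let omDl z x y : om (x + y) z = om x z + om y z. Proof. exact: (linear_forD (om_scalarl z)). Qed.
Let omDr z x y : om z (x + y) = om z x + om z y. Proof. exact: (linear_forD (om_scalarr z)). Qed.
Let omBl z x y : om (x - y) z = om x z - om y z. Proof. exact: (linear_forB (om_scalarl z)). Qed.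
Let omBr z x y : om z (x - y) = om z x - om z y. Proof. exact: (linear_forB (om_scalarr z)). Qed.

Lemma circ_bil : bilinear_op circ. Proof. exact: bilinear_opD. Qed.
Lemma odot_bil : bilinear_op odot. Proof. exact: bilinear_opD (bilinear_op_flip _). Qed.

Lemma Lstar_linear x : linear (Lstar succ prec x).
Proof.
move=> a y z; rewrite /Lstar /= (bilinear_opr circ_bil) (bilinear_opl circ_bil).
by rewrite addrACA -scalerDr.
Qed.

Lemma om_inj u v : (forall w, om u w = om v w) -> u = v.
Proof. by move=> uv; apply/subr0_eq/om_nondeg => w; rewrite omBl uv subrr. Qed.

Lemma om_prec_l a b c : om (prec a b) c = - om a (circ c b).
Proof. by case: om_quad => _ _ _ ->. Qed.
Lemma om_succ_r a b c : om (succ a b) c = om (circ a c + circ c a) b.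
Proof. by case: om_quad => _ _ _ _ ->. Qed.

Lemma om_circ_r a b c : om (circ a b) c = om b (odot a c).
Proof.
rewrite /Defs.odot omDr (om_sym b (succ a c)) (om_sym b (prec c a)).
by rewrite om_succ_r om_prec_l omDl (om_sym c) addrK.
Qed.

Lemma om_prec_r a b c : om (prec a b) c = - om b (prec a c + succ c a).
Proof.
have -> : prec a b = circ a b - succ a b by rewrite /Defs.circ addrC addKr.
rewrite omBl om_circ_r om_succ_r (om_sym _ b) /Defs.odot /Defs.circ !omDr; ring.
Qed.

Lemma pairing_omega_sharp x y : pairing (omega_sharp x) y = om x y.
Proof.
rewrite (scalar_expand (om_scalarr x)) /pairing; apply: eq_bigr => j _.
by rewrite mxE mulrC.
Qed.

Lemma omega_sharp_surj z : exists x, omega_sharp x = z.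
Proof.
pose M := \matrix_(i, j) om (e i) (e j).
have omega_sharpE x : omega_sharp x = x *m M.
  apply/rowP => j; rewrite !mxE (scalar_expand (om_scalarl (e j))).
  by apply: eq_bigr => i _; rewrite mxE.
have M_unit : M \in unitmx.
  rewrite -row_free_unit; apply/inj_row_free => x xM0; apply: om_nondeg => y.
  by rewrite -pairing_omega_sharp omega_sharpE xM0 /pairing big1 // => i _; rewrite mxE mul0r.
by exists (z *m invmx M); rewrite omega_sharpE mulmxKV.
Qed.

Definition Tsharp (r : 'M[k]_n) (x : A) : A := Tmap r (omega_sharp x).

Lemma om_Tsharp r u v : om v (Tsharp r u) = contract2 r (omega_sharp u) (omega_sharp v).
Proof. by rewrite -pairing_omega_sharp pairing_Tmap. Qed.

Lemma Tsharp_adjoint r u v : om (Tsharp r u) v = om u (Tsharp (tflip r) v).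
Proof. by rewrite om_sym !om_Tsharp contract2_tflip. Qed.

Lemma Tsharp_linear r : linear (Tsharp r).
Proof.
move=> a x y; apply: om_inj => w.
rewrite omDl (linear_forZ (om_scalarl w)) /= !Tsharp_adjoint.
by rewrite omDl (linear_forZ (om_scalarl _)).
Qed.

Lemma Tsharp_expand r x : Tsharp r x = \sum_p om x (tfst r p) *: tsnd k p.
Proof.
rewrite /Tsharp Tmap_expand pair_bigA; apply: eq_bigr => -[i j] _.
by rewrite /tfst /tsnd /= (linear_forZ (om_scalarr x)) mxE mulrC.
Qed.

Lemma Tsharp_tflip_expand r y : Tsharp (tflip r) y = \sum_p om y (tsnd k p) *: tfst r p.
Proof.
rewrite /Tsharp Tmap_expand exchange_big pair_bigA; apply: eq_bigr => -[j i] _.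
by rewrite /tfst /tsnd /= !mxE scalerA.
Qed.

Section Invariance.
Variables (r : 'M[k]_n) (r_inv : inv_tensor succ prec r).

Lemma om_Lstar_Tsharp x u v :
  om v (circ x (Tsharp r u) + circ (Tsharp r u) x) = om u (succ x (Tsharp (tflip r) v)).
Proof.
have [inv_star _] := r_inv x.
have := congr1 (fun t => contract2 t (omega_sharp u) (omega_sharp v)) inv_star.
rewrite /= (linear_forB (contract2_scalar _ _)) (linear_for0 (contract2_scalar _ _)).
rewrite contract2_tmap2_idl ?contract2_tmap2_idr; last 2 first.
- exact: (bilinear_opr succ_bil x).
- exact: (Lstar_linear x).
by rewrite !pairing_omega_sharp => /subr0_eq.
Qed.

Lemma om_Lcirc_Tsharp x u v :
  om u (circ x (Tsharp (tflip r) v)) = om v (odot x (Tsharp r u)).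
Proof.
have [_ inv_circ] := r_inv x.
have := congr1 (fun t => contract2 t (omega_sharp u) (omega_sharp v)) inv_circ.
rewrite /= (linear_forB (contract2_scalar _ _)) (linear_for0 (contract2_scalar _ _)).
rewrite contract2_tmap2_idl ?contract2_tmap2_idr; last 2 first.
- exact: (bilinear_opr circ_bil x).
- exact: (bilinear_opr odot_bil x).
by rewrite !pairing_omega_sharp => /subr0_eq.
Qed.

Hypothesis r_sym : tflip r = r.
Local Notation Q := (Tsharp r).

Lemma Tsharp_selfadjoint u v : om (Q u) v = om u (Q v).
Proof. by rewrite Tsharp_adjoint r_sym. Qed.

Lemma Tsharp_succl x v : Q (succ x v) = succ x (Q v).
Proof.
apply: om_inj => u; rewrite Tsharp_selfadjoint om_succ_r om_sym om_Lstar_Tsharp r_sym.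
by rewrite om_sym.
Qed.

Lemma Tsharp_circl x v : Q (circ x v) = circ x (Q v).
Proof.
apply: om_inj => u; rewrite Tsharp_selfadjoint om_circ_r -om_Lcirc_Tsharp r_sym.
by rewrite om_sym.
Qed.

Lemma Tsharp_circr y z : Q (circ y z) = circ (Q y) z.
Proof.
have Q_star : Q (circ z y + circ y z) = circ z (Q y) + circ (Q y) z.
  apply: om_inj => u.
  by rewrite Tsharp_selfadjoint -om_succ_r -Tsharp_succl Tsharp_selfadjoint om_succ_r.
by move: Q_star; rewrite (linear_forD (Tsharp_linear r)) Tsharp_circl => /addrI.
Qed.

Lemma Tsharp_precr y x : Q (prec y x) = prec (Q y) x.
Proof.
apply: om_inj => u.
by rewrite Tsharp_selfadjoint om_prec_l -Tsharp_circr -Tsharp_selfadjoint -om_prec_l.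
Qed.

Lemma Tsharp_succr y x : Q (succ y x) = succ (Q y) x.
Proof.
have succE a b : succ a b = circ a b - prec a b by rewrite /Defs.circ addrK.
by rewrite succE (linear_forB (Tsharp_linear r)) Tsharp_circr Tsharp_precr -succE.
Qed.

End Invariance.

Section YangBaxter.
Variables (s : 'M[k]_n) (s_inv : inv_tensor succ prec (s + tflip s)).

Local Notation P := (Tsharp s).
Local Notation P' := (Tsharp (tflip s)).
Local Notation Q := (Tsharp (s + tflip s)).

Let Q_sym : tflip (s + tflip s) = s + tflip s.
Proof. by rewrite /tflip linearD /= trmxK addrC. Qed.

Let QE x : Q x = P x + P' x. Proof. exact: TmapD. Qed.

Let P_adjoint x y : om (P x) y = om x (P' y). Proof. exact: Tsharp_adjoint. Qed.

Definition defect (m : A -> A -> A) x y :=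
  m (P x) (P y) - P (m (P x) y + m x (P y) - m x (Q y)).

Lemma defect_arg (m : A -> A -> A) : bilinear_op m -> forall x y,
  m (P x) y + m x (P y) - m x (Q y) = m (P x) y - m x (P' y).
Proof. by move=> m_bil x y; rewrite QE (linear_forD (bilinear_opr m_bil x)) opprD addrA addrK. Qed.

Definition ybe_form x y z :=
  om x (circ (P' y) (P' z)) + om z (odot (P y) (P x)) + om y (prec (P x) (P' z)).

Let Q_succl := Tsharp_succl s_inv Q_sym.
Let Q_succr := Tsharp_succr s_inv Q_sym.
Let Q_circl := Tsharp_circl s_inv Q_sym.
Let Q_circr := Tsharp_circr s_inv Q_sym.

Lemma ybe_form_prec_defect x y z : ybe_form x y z = - om (defect prec x z) y.
Proof.
have swap : om (P x) (circ (P y) z) + om (P x) (circ (P' y) z) =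
            om (P x) (circ y (P z)) + om (P x) (circ y (P' z)).
  rewrite -!omDr -(linear_forD (bilinear_opl circ_bil z)).
  by rewrite -(linear_forD (bilinear_opr circ_bil y)) -!QE -Q_circr Q_circl.
move/(canRL (addrK _)): swap => swap.
have om_odot : om z (odot (P y) (P x)) = om (P x) (circ (P y) z) by rewrite -om_circ_r om_sym.
have om_prec : om y (prec (P x) (P' z)) = - om (P x) (circ y (P' z)) by rewrite om_sym om_prec_l.
have om_defect : om (defect prec x z) y = - om (P x) (circ y (P z)) +
    om (P x) (circ (P' y) z) - om x (circ (P' y) (P' z)).
  rewrite /defect defect_arg // (omBl y) P_adjoint (omBl (P' y)) !om_prec_l.
  ring.
rewrite /ybe_form om_odot om_prec om_defect swap; ring.
Qed.

Lemma ybe_form_defects x y z : ybe_form x y z = om z (defect prec x y + defect succ y x).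
Proof.
have swap : om (P' z) (succ (P y) x) + om (P' z) (succ (P' y) x) =
            om (P' z) (succ y (P x)) + om (P' z) (succ y (P' x)).
  rewrite -!omDr -(linear_forD (bilinear_opl succ_bil x)).
  by rewrite -(linear_forD (bilinear_opr succ_bil y)) -!QE -Q_succr Q_succl.
move/(canRL (addrK _)): swap => swap.
have om_circ : om x (circ (P' y) (P' z)) = om (P' z) (succ (P' y) x) + om (P' z) (prec x (P' y)).
  by rewrite om_sym om_circ_r /Defs.odot omDr.
have om_prec : om y (prec (P x) (P' z)) = - (om (P' z) (prec (P x) y) + om (P' z) (succ y (P x))).
  by rewrite om_sym om_prec_r omDr.
have om_P v w : om v (P w) = om (P' v) w by rewrite om_sym P_adjoint om_sym.
rewrite /ybe_form om_circ /Defs.odot omDr om_prec /defect !defect_arg //.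
rewrite omDr !omBr !om_P !omBr swap.
ring.
Qed.

Lemma APN_YBE_ybe_form : APN_YBE succ prec s <-> forall x y z, ybe_form x y z = 0.
Proof.
rewrite /APN_YBE; set Y := (X in X = 0).
have contract_Y x y z :
    contract3 Y (omega_sharp x) (omega_sharp y) (omega_sharp z) = ybe_form x y z.
  rewrite /Y contract3_sum /ybe_form !Tsharp_tflip_expand !Tsharp_expand.
  rewrite (bilinear_op_sum (om_scalarr x) circ_bil) (bilinear_op_sum (om_scalarr z) odot_bil).
  rewrite (bilinear_op_sum (om_scalarr y) prec_bil) -!big_split; apply: eq_bigr => p _.
  rewrite contract3_sum -!big_split; apply: eq_bigr => q _.
  by rewrite !contract3D !contract3_tens3 !pairing_omega_sharp /=; ring.
split=> [Y0 x y z | form0]; first by rewrite -contract_Y Y0 contract30.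
apply: contract3_eq0 => z1 z2 z3.
have [x <-] := omega_sharp_surj z1; have [y <-] := omega_sharp_surj z2.
have [z <-] := omega_sharp_surj z3.
by rewrite contract_Y form0.
Qed.

Lemma APN_YBE_defects :
  APN_YBE succ prec s <-> forall x y, defect succ x y = 0 /\ defect prec x y = 0.
Proof.
have om0 w : om 0 w = 0 by exact: (linear_for0 (om_scalarl w)).
rewrite APN_YBE_ybe_form; split=> [form0 | defect0 x y z]; last first.
  by rewrite ybe_form_defects (defect0 x y).2 (defect0 y x).1 addr0 om_sym om0.
have prec0 x y : defect prec x y = 0.
  apply: om_inj => w; apply/eqP.
  by rewrite om0 -oppr_eq0 -ybe_form_prec_defect form0.
have succ0 x y : defect succ x y = 0.
  apply: om_inj => w; rewrite om_sym om0 -[defect succ x y]add0r -(prec0 y x).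
  by rewrite -ybe_form_defects form0.
by move=> x y; rewrite prec0 succ0.
Qed.

End YangBaxter.

End QuadraticAlgebra.

Theorem mainTheorem15 (k : fieldType) (n : nat)
  (succ prec : 'rV[k]_n -> 'rV[k]_n -> 'rV[k]_n) (om : 'rV[k]_n -> 'rV[k]_n -> k)
  (s : 'M[k]_n) :
  bilinear_op succ -> bilinear_op prec ->
  anti_pre_Novikov succ prec ->
  quadratic succ prec om ->
  inv_tensor succ prec (s + tflip s) ->
  let P := fun x => Tmap s (omega_sharp om x) in
  APN_YBE succ prec s <->
  (forall x y,
     succ (P x) (P y) =
       P (succ (P x) y + succ x (P y) - succ x (Tmap (s + tflip s) (omega_sharp om y))) /\
     prec (P x) (P y) =
       P (prec (P x) y + prec x (P y) - prec x (Tmap (s + tflip s) (omega_sharp om y)))).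
Proof.
move=> succ_bil prec_bil _ om_quad s_inv P.
rewrite (APN_YBE_defects succ_bil prec_bil om_quad s_inv).
split=> defect0 x y.
  by have [succ0 prec0] := defect0 x y; split; apply/subr0_eq.
by rewrite /defect (defect0 x y).1 (defect0 x y).2 !subrr.
Qed.
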